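(* Let $W_{12}=\{(0,0,0),(0,0,1),(0,1,0),(1,0,0)\}\subseteq\{0,1\}^3$. Then $\Lambda(W_{12},3)=1$ and, for every integer $n\ge 4$, $$\Lambda(W_{12},n)=\frac12\binom n3 2^{n-3}.$$
   Context: The $n$-hypercube $Q_n$ is the graph on $\{0,1\}^n$ in which two sequences are adjacent iff they differ in exactly one coordinate. A $3$-subcube of $\{0,1\}^n$ is a set $C\subseteq\{0,1\}^n$ obtained by fixing $n-3$ coordinates to constant values and letting the remaining $3$ coordinates vary arbitrarily (equivalently, $Q_n[C]\cong Q_3$). For $H\subseteq\{0,1\}^3$ and $S\subseteq\{0,1\}^n$, a $3$-subcube $C$ gives a copy of $H$ in $S$ if there is a graph isomorphism $f$ from $Q_3$ to $Q_n[C]$ with $f(H)=S\cap C$. Let $\Lambda(H,S)$ be the number of $3$-subcubes giving a copy of $H$ in $S$, and $\Lambda(H,n)=\max\{\Lambda(H,S): S\subseteq\{0,1\}^n\}$ for $n\ge 3$. *)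

From mathcomp Require Import all_boot.
Set Implicit Arguments. Unset Strict Implicit. Unset Printing Implicit Defensive.

Definition cube (n : nat) := {ffun 'I_n -> bool}.

Definition adj (n : nat) (x y : cube n) : bool := #|[set i | x i != y i]| == 1.

Definition subcube_of (n : nat) (D : {set 'I_n}) (base : cube n) : {set cube n} :=
  [set x : cube n | [forall i, (i \notin D) ==> (x i == base i)]].

Definition is_3subcube (n : nat) (C : {set cube n}) : bool :=
  [exists D : {set 'I_n}, exists base : cube n, (#|D| == 3) && (C == subcube_of D base)].

Definition gives_copy (n : nat) (H : {set cube 3}) (S : {set cube n})
    (C : {set cube n}) : bool :=
  [exists f : {ffun cube 3 -> cube n},
     [&& injectiveb f, f @: [set: cube 3] == C,
         [forall x, forall y, adj x y == adj (f x) (f y)]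
       & f @: H == S :&: C]].

Definition LambdaS (n : nat) (H : {set cube 3}) (S : {set cube n}) : nat :=
  #|[set C : {set cube n} | is_3subcube C && gives_copy H S C]|.

Definition Lambda (H : {set cube 3}) (n : nat) : nat :=
  \max_(S : {set cube n}) LambdaS H S.

Definition mk3 (a b c : bool) : cube 3 := [ffun i : 'I_3 => nth false [:: a; b; c] i].

Definition W12 : {set cube 3} :=
  [set mk3 false false false; mk3 false false true;
       mk3 false true false; mk3 true false false].

From mathcomp Require Import all_boot zify.
Set Implicit Arguments. Unset Strict Implicit. Unset Printing Implicit Defensive.

(* S gives a copy of W12 in a 3-subcube C exactly when S ∩ C is the closed neighbourhood in C
   of one of its vertices, a star.  Upper bound: a 3-subcube together with one more free
   direction is a facet of a 4-subcube, and at most 4 of the 8 facets of Q_4 can be stars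
   (checked by evaluation over all 2^16 subsets of Q_4).  Each 3-subcube is a facet of n - 3
   4-subcubes, so (n - 3) Λ <= 4 'C(n, 4) 2^(n-4) = (n - 3) 'C(n, 3) 2^(n-4).  Lower bound: for
   S = {x : |x| ≡ 0, 1 (mod 4)}, a 3-subcube whose fixed coordinates have even weight w is a
   star, centred at its bottom vertex if w ≡ 0 and at its top vertex if w ≡ 2 (mod 4); half of
   all 3-subcubes are of this kind.  For n = 3 there is only one 3-subcube. *)

Section Cube.
Variable n : nat.
Implicit Types (x y : cube n) (D : {set 'I_n}).

Definition diff x y : {set 'I_n} := [set i | x i != y i].

Lemma adjE x y : adj x y = (#|diff x y| == 1). Proof. by []. Qed.

Lemma card_diff x y : #|diff x y| = \sum_(i < n) (x i != y i).
Proof.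
by rewrite -sum1_card big_mkcond; apply: eq_bigr => i _; rewrite inE; case: (_ != _).
Qed.

Lemma eq_or_adjE x y : (y == x) || adj x y = (#|diff x y| <= 1).
Proof.
have -> : (y == x) = (#|diff x y| == 0).
  rewrite cards_eq0; apply/eqP/eqP => [->|xy]; first by apply/setP=> i; rewrite !inE eqxx.
  by apply/ffunP=> i; move/setP/(_ i): xy; rewrite !inE => /negbFE/eqP.
by rewrite adjE; case: #|_| => [|[]].
Qed.

Lemma subcube_self D b : b \in subcube_of D b.
Proof. by rewrite inE; apply/forallP=> i; rewrite eqxx implybT. Qed.

Lemma subcube_of_mem D b v : v \in subcube_of D b -> subcube_of D v = subcube_of D b.
Proof.
rewrite inE => /forallP vb; apply/setP=> x; rewrite !inE; apply: eq_forallb => i.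
by case: (boolP (i \in D)) => //= iD; rewrite (eqP (implyP (vb i) iD)).
Qed.

End Cube.

Section Embedding.
Variables (n m : nat) (e : 'I_m -> 'I_n).
Hypothesis e_inj : injective e.

Definition embed (w : cube n) (y : cube m) : cube n :=
  [ffun i => if [pick k | e k == i] is Some k then y k else w i].

Variant embed_spec (i : 'I_n) : Prop :=
  | EmbedIn k of i = e k
  | EmbedOut of i \notin e @: setT.

Lemma embedP i : embed_spec i.
Proof.
case: (pickP (fun k => e k == i)) => [k /eqP ki|eNi]; first exact: EmbedIn (esym ki).
by apply: EmbedOut; apply/imsetP => -[k _ ik]; move: (eNi k); rewrite ik eqxx.
Qed.

Lemma embed_in w y k : embed w y (e k) = y k.
Proof. by rewrite ffunE; case: pickP => [k' /eqP /e_inj -> //|/(_ k)]; rewrite eqxx. Qed.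

Lemma embed_out w y i : i \notin e @: setT -> embed w y i = w i.
Proof.
by move=> iNe; rewrite ffunE; case: pickP => // k /eqP ki; rewrite -ki imset_f in iNe.
Qed.

Lemma embed_inj w : injective (embed w).
Proof. by move=> y y' eq_y; apply/ffunP=> k; rewrite -!(embed_in w) eq_y. Qed.

Lemma diff_embed w y y' : diff (embed w y) (embed w y') = e @: diff y y'.
Proof.
apply/setP=> i; rewrite inE; case: (embedP i) => [k ->|iNe].
  by rewrite !embed_in (mem_imset _ _ e_inj) inE.
rewrite !embed_out // eqxx; apply/esym; apply: contraNF iNe.
by case/imsetP=> k _ ->; rewrite imset_f.
Qed.

Lemma adj_embed w y y' : adj (embed w y) (embed w y') = adj y y'.
Proof. by rewrite !adjE diff_embed card_imset. Qed.

Lemma embed_restrict w : embed w [ffun k => w (e k)] = w.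
Proof.
by apply/ffunP=> i; case: (embedP i) => [k ->|/embed_out->]; rewrite ?embed_in ?ffunE.
Qed.

Lemma subcube_embed w u (K : {set 'I_m}) :
  subcube_of (e @: K) (embed w u) =
  embed w @: [set y : cube m | [forall k, (k \notin K) ==> (y k == u k)]].
Proof.
apply/setP=> x; rewrite inE; apply/forallP/imsetP => [xK|[y]].
  exists [ffun k => x (e k)].
    rewrite inE; apply/forallP=> k; apply/implyP=> kNK; rewrite ffunE.
    by rewrite -(embed_in w u) (implyP (xK (e k))) // (mem_imset _ _ e_inj).
  apply/ffunP=> i; case: (embedP i) => [k ->|iNe]; first by rewrite embed_in ffunE.
  rewrite embed_out // -(embed_out w u iNe); apply/eqP/(implyP (xK i)).
  by apply: contra iNe => /imsetP [k _ ->]; rewrite imset_f.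
rewrite inE => /forallP yK -> i; apply/implyP; case: (embedP i) => [k -> |iNe _].
  by rewrite (mem_imset _ _ e_inj) !embed_in => /(implyP (yK k)).
by rewrite !embed_out.
Qed.

Lemma subcube_embedT w : subcube_of (e @: setT) w = embed w @: setT.
Proof.
rewrite -{1}(embed_restrict w) subcube_embed; apply/setP=> x.
apply/imsetP/imsetP => -[y _ ->]; exists y => //.
by rewrite inE; apply/forallP=> k; rewrite inE.
Qed.

End Embedding.

Lemma injection_onto n (D : {set 'I_n}) m : #|D| = m ->
  exists2 e : 'I_m -> 'I_n, injective e & e @: setT = D.
Proof.
move=> Dm; pose e k := enum_val (cast_ord (esym Dm) k).
have e_inj : injective e by move=> k k' /enum_val_inj /cast_ord_inj.
exists e => //; apply/eqP; rewrite eqEcard card_imset // cardsT card_ord Dm leqnn andbT.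
by apply/subsetP=> i /imsetP [k _ ->]; apply: (enum_valP (A := mem D)).
Qed.

Lemma card_subcube n (D : {set 'I_n}) b : #|subcube_of D b| = 2 ^ #|D|.
Proof.
have [e e_inj De] := injection_onto (erefl #|D|).
rewrite -{1}De (subcube_embedT e_inj) card_imset; last exact: embed_inj.
by rewrite cardsT card_ffun card_bool card_ord.
Qed.

(** * Copies of W12 are stars *)

Definition star n (S C : {set cube n}) : bool :=
  [exists v in C, [forall x in C, (x \in S) == (#|diff v x| <= 1)]].

Definition origin m : cube m := [ffun => false].

Definition xorc m (a x : cube m) : cube m := [ffun i => a i (+) x i].

Lemma xorcK m (a : cube m) : involutive (xorc a).
Proof. by move=> x; apply/ffunP=> i; rewrite !ffunE addKb. Qed.

Lemma diff_xorc m (a x y : cube m) : diff (xorc a x) (xorc a y) = diff x y.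
Proof. by apply/setP=> i; rewrite !inE !ffunE; case: (a i) (x i) (y i) => [] [] []. Qed.

Lemma card_diff_inj_adj n m (g : cube m -> cube n) :
  injective g -> (forall x y, adj (g x) (g y) = adj x y) ->
  forall x y, (#|diff (g x) (g y)| <= 1) = (#|diff x y| <= 1).
Proof. by move=> g_inj g_adj x y; rewrite -!eq_or_adjE (inj_eq g_inj) g_adj. Qed.

Lemma star_imset n m (g : cube m -> cube n) (S : {set cube n}) (Y : {set cube m}) :
  injective g -> (forall x y, adj (g x) (g y) = adj x y) ->
  star S (g @: Y) = star (g @^-1: S) Y.
Proof.
move=> g_inj g_adj; apply/existsP/existsP => -[v /andP [vY /forallP vS]].
  case/imsetP: vY => u uY def_v; exists u; rewrite uY; apply/forallP=> y.
  apply/implyP=> yY; rewrite inE -(card_diff_inj_adj g_inj g_adj) -def_v.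
  by apply: (implyP (vS (g y))); rewrite imset_f.
exists (g v); rewrite imset_f //; apply/forallP=> x; apply/implyP=> /imsetP [y yY ->].
by rewrite (card_diff_inj_adj g_inj g_adj); have := implyP (vS y) yY; rewrite inE.
Qed.

Lemma cube3E (y : cube 3) : y = mk3 (y ord0) (y (inord 1)) (y (inord 2)).
Proof.
apply/ffunP=> -[[|[|[|i]]] lti] //; rewrite ffunE /=; congr (y _); apply: val_inj.
all: by rewrite [LHS]/= [RHS]/= ?inordK.
Qed.

Lemma mk3_eq a b c a' b' c' :
  (mk3 a b c == mk3 a' b' c') = [&& a == a', b == b' & c == c'].
Proof.
apply/eqP/and3P => [eq_abc|[/eqP-> /eqP-> /eqP->] //].
by split; apply/eqP; [move/ffunP/(_ ord0): eq_abc | move/ffunP/(_ (inord 1)): eq_abc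
  | move/ffunP/(_ (inord 2)): eq_abc]; rewrite !ffunE /= ?inordK.
Qed.

Lemma W12E (y : cube 3) : (y \in W12) = (#|diff (origin 3) y| <= 1).
Proof.
rewrite (cube3E y); move: (y ord0) (y (inord 1)) (y (inord 2)) => a b c.
rewrite card_diff !big_ord_recr big_ord0 /= !ffunE /= !inE !mk3_eq.
by case: a; case: b; case: c.
Qed.

Lemma copy_W12_star n (S C : {set cube n}) : gives_copy W12 S C -> star S C.
Proof.
case/existsP=> f /and4P [/injectiveP f_inj /eqP fC /forallP f_adj /eqP fW].
have f_adj' x y : adj (f x) (f y) = adj x y by have /eqP := forallP (f_adj x) y.
rewrite -fC star_imset //.
have -> : f @^-1: S = W12.
  apply/setP=> y; rewrite inE -(mem_imset _ _ f_inj) fW inE -fC imset_f //.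
  by rewrite andbT.
apply/existsP; exists (origin 3); rewrite inE /=.
by apply/forallP=> y; rewrite W12E eqxx implybT.
Qed.

Lemma star_copy_W12 n (S : {set cube n}) (D : {set 'I_n}) b :
  #|D| = 3 -> star S (subcube_of D b) -> gives_copy W12 S (subcube_of D b).
Proof.
move=> D3 /existsP [v /andP [vC /forallP vS]].
have [e e_inj De] := injection_onto D3.
rewrite -(subcube_of_mem vC) -De (subcube_embedT e_inj) in vS *.
pose a : cube 3 := [ffun k => v (e k)].
pose f : {ffun cube 3 -> cube n} := [ffun y => embed e v (xorc a y)].
have f_inj : injective f.
  by move=> y y'; rewrite !ffunE => /(embed_inj e_inj) /(can_inj (xorcK a)).
have f_diff y y' : #|diff (f y) (f y')| = #|diff y y'|.
  by rewrite !ffunE (diff_embed e_inj) card_imset // diff_xorc.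
have fC : f @: setT = embed e v @: setT.
  by apply/setP=> x; apply/imsetP/imsetP => -[y _ ->]; exists (xorc a y);
    rewrite // ffunE ?xorcK.
have f0 : f (origin 3) = v.
  rewrite ffunE -[RHS](embed_restrict e_inj v); congr embed.
  by apply/ffunP=> k; rewrite !ffunE addbF.
have fS y : (f y \in S) = (y \in W12).
  rewrite W12E -f_diff f0; apply/eqP/(implyP (vS (f y))).
  by rewrite -fC imset_f.
apply/existsP; exists f; apply/and4P; split.
- exact/injectiveP.
- by rewrite fC.
- by apply/forallP=> x; apply/forallP=> y; rewrite !adjE f_diff.
apply/eqP/setP=> x; rewrite inE -fC.
apply/imsetP/andP => [[y yW ->]|[xS /imsetP [y _ def_x]]].
  by rewrite fS imset_f.
by exists y; rewrite // -fS -def_x.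
Qed.

Lemma LambdaS_W12E n (S : {set cube n}) :
  LambdaS W12 S = #|[set C | is_3subcube C && star S C]|.
Proof.
apply: eq_card => C; rewrite !inE; apply: andb_id2l.
case/existsP=> D /existsP [b /andP [/eqP D3 /eqP ->]].
by apply/idP/idP; [exact: copy_W12_star | exact: star_copy_W12].
Qed.

Definition flip_on n (E : {set 'I_n}) : cube n -> cube n := xorc [ffun i => i \in E].

Lemma flip_onE n (E : {set 'I_n}) x i : flip_on E x i = (i \in E) (+) x i.
Proof. by rewrite !ffunE. Qed.

Lemma subcube_of_dir n (D D' : {set 'I_n}) b b' :
  subcube_of D b = subcube_of D' b' -> D = D'.
Proof.
suff sub_dir (D1 D2 : {set 'I_n}) (b1 b2 : cube n) :
    subcube_of D1 b1 = subcube_of D2 b2 -> D1 \subset D2.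
  move=> eqC; apply/eqP.
  by rewrite eqEsubset (sub_dir _ _ _ _ eqC) (sub_dir _ _ _ _ (esym eqC)).
move=> eqC; apply/subsetP=> i iD1; apply: contraT => iND2.
have: flip_on [set i] b1 \in subcube_of D2 b2.
  rewrite -eqC inE; apply/forallP=> j; apply/implyP=> jND1; rewrite flip_onE inE.
  by case: (j =P i) jND1 => [->|]; rewrite ?iD1.
have: b1 \in subcube_of D2 b2 by rewrite -eqC subcube_self.
rewrite !inE => /forallP/(_ i) + /forallP/(_ i); rewrite iND2 flip_onE inE eqxx /=.
by move=> /eqP <-; case: (b1 i).
Qed.

Definition is_subcube n d (C : {set cube n}) : bool :=
  [exists D : {set 'I_n}, exists b : cube n, (#|D| == d) && (C == subcube_of D b)].

Lemma sum_subcubes n d (P : pred {set cube n}) :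
  \sum_(D : {set 'I_n} | #|D| == d) \sum_(b : cube n) P (subcube_of D b)
  = 2 ^ d * #|[set C | is_subcube d C && P C]|.
Proof.
rewrite pair_big /= (eq_bigr (fun p => if P (subcube_of p.1 p.2) then 1 else 0)) //.
rewrite -big_mkcondr.
rewrite (partition_big (fun p => subcube_of p.1 p.2) (fun C => is_subcube d C && P C)) /=;
  last first.
  case=> D b /andP [/andP [Dd _] PC]; rewrite PC andbT.
  by apply/existsP; exists D; apply/existsP; exists b; rewrite Dd eqxx.
rewrite [RHS]mulnC -sum_nat_cond_const; apply: eq_bigr => C /andP [].
case/existsP=> D0 /existsP [b0 /andP [/eqP D0d /eqP ->]] PC.
rewrite sum1dep_card -D0d -(card_subcube D0 b0) -[#|subcube_of _ _|]mul1n -(cards1 D0) -cardsX.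
apply: eq_card => -[D b]; rewrite [LHS]inE in_setX in_set1 /=.
apply/idP/andP => [/andP [/andP [_ _] /eqP eqC]|[/eqP -> bC]].
  by have eqD := subcube_of_dir eqC; rewrite -eqC -eqD subcube_self eqD.
by rewrite (subcube_of_mem bC) !eqxx PC.
Qed.

Lemma card_3subcubes n : 8 * #|[set C : {set cube n} | is_3subcube C]| = 'C(n, 3) * 2 ^ n.
Proof.
have := sum_subcubes 3 (@predT {set cube n}).
rewrite (eq_card (B := [set C | is_3subcube C])) => [<-|C]; last by rewrite !inE andbT.
rewrite (eq_bigr (fun _ => 2 ^ n)) => [|D _]; last first.
  by rewrite sum_nat_const card_ffun card_bool card_ord muln1.
by rewrite sum_nat_cond_const card_draws card_ord.
Qed.

Lemma LambdaS_le_card_3subcubes n (H : {set cube 3}) (S : {set cube n}) :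
  LambdaS H S <= #|[set C : {set cube n} | is_3subcube C]|.
Proof. by apply/subset_leq_card/subsetP => C; rewrite !inE => /andP []. Qed.

(** * Stars on the facets of Q_4 *)

Fixpoint bitseqs (m : nat) : seq bitseq :=
  if m is m'.+1 then [seq b :: s | b <- [:: true; false], s <- bitseqs m'] else [:: [::]].

Lemma mem_bitseqs m s : (s \in bitseqs m) = (size s == m).
Proof.
elim: m s => [|m IHm] s; first by case: s => [|b s]; rewrite inE.
rewrite -[bitseqs m.+1]/[seq b :: s | b <- [:: true; false], s <- bitseqs m].
apply/allpairsP/idP => [[[b' s'] [_ /= s'm ->]]|]; first by rewrite /= eqSS -IHm.
case: s => [|b s] // sm; exists (b, s); rewrite /= IHm -eqSS sm; by case: b {sm}.
Qed.

Definition V4 := bitseqs 4.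

Definition cube_of (s : bitseq) : cube 4 := [ffun k : 'I_4 => nth false s k].

Definition bits_of (y : cube 4) : bitseq := [seq y k | k <- enum 'I_4].

Lemma bits_ofK : cancel bits_of cube_of.
Proof.
move=> y; apply/ffunP=> k; rewrite ffunE (nth_map ord0) ?size_enum_ord //.
by rewrite nth_ord_enum.
Qed.

Lemma bits_of_V4 y : bits_of y \in V4.
Proof. by rewrite mem_bitseqs size_map size_enum_ord. Qed.

Lemma existsb_cube4 (Q : pred (cube 4)) : [exists y, Q y] = has (Q \o cube_of) V4.
Proof.
apply/existsP/hasP => [[y Qy]|[s _ Qs]]; last by exists (cube_of s).
by exists (bits_of y); rewrite ?bits_of_V4 //= bits_ofK.
Qed.

Lemma forallb_cube4 (Q : pred (cube 4)) : [forall y, Q y] = all (Q \o cube_of) V4.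
Proof.
apply/forallP/allP => [Q_all s _|Q_all y]; first exact: Q_all.
by rewrite -(bits_ofK y); apply: Q_all (bits_of_V4 y).
Qed.

Definition hamming (s t : bitseq) : nat := count (fun ab => ab.1 != ab.2) (zip s t).

Lemma card_diff_cube_of s t :
  s \in V4 -> t \in V4 -> #|diff (cube_of s) (cube_of t)| = hamming s t.
Proof.
rewrite !mem_bitseqs.
case: s => [|a0 [|a1 [|a2 [|a3 [|]]]]] //; case: t => [|b0 [|b1 [|b2 [|b3 [|]]]]] // _ _.
by rewrite card_diff !big_ord_recr big_ord0 /= !ffunE /hamming /= add0n !addnA addn0.
Qed.

Lemma star_facet4 (T : {set cube 4}) (k : 'I_4) c :
  star T [set y : cube 4 | y k == c] =
  has (fun v => (nth false v k == c) &&
     all (fun s => (nth false s k == c) ==> ((cube_of s \in T) == (hamming v s <= 1))) V4) V4.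
Proof.
rewrite /star existsb_cube4; apply/eq_in_has => v vV4; rewrite [LHS]/= inE ffunE.
congr (_ && _); rewrite forallb_cube4; apply/eq_in_all => s sV4.
by rewrite /= inE ffunE card_diff_cube_of.
Qed.

(* A subset T of Q_4 is encoded by its characteristic list l over V4.  For the facet
   x_k = c, facet_code lists the positions of its vertices in V4 and the characteristic
   vectors of its eight stars, so that star_code l tests whether T is a star on that facet. *)
Definition facet4 (k : nat) (c : bool) : seq bitseq := [seq s <- V4 | nth false s k == c].

Definition facet_code (k : nat) (c : bool) : seq nat * seq bitseq :=
  ([seq index s V4 | s <- facet4 k c],
   [seq [seq hamming v s <= 1 | s <- facet4 k c] | v <- facet4 k c]).

Definition star_code (l : bitseq) (code : seq nat * seq bitseq) : bool :=
  [seq nth false l i | i <- code.1] \in code.2.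

Lemma star_facet_code (T : {set cube 4}) (k : 'I_4) c :
  star T [set y : cube 4 | y k == c] =
  star_code [seq cube_of s \in T | s <- V4] (facet_code k c).
Proof.
rewrite star_facet4 /star_code /facet_code; cbn [fst snd]; rewrite -map_comp.
set F := facet4 k c.
have -> : [seq nth false [seq cube_of s \in T | s <- V4] (index s V4) | s <- F] =
          [seq cube_of s \in T | s <- F].
  apply/eq_in_map => s; rewrite mem_filter => /andP [_ sV4].
  by rewrite (nth_map [::]) ?index_mem // nth_index.
apply/hasP/mapP => [[v vV4 /andP [vk /allP vT]]|[v]].
  exists v; first by rewrite mem_filter vk.
  apply/eq_in_map => s; rewrite mem_filter => /andP [sk sV4].
  exact/eqP/(implyP (vT s sV4) sk).
rewrite mem_filter => /andP [vk vV4] /eq_in_map vT; exists v; rewrite // vk.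
by apply/allP => s sV4; apply/implyP => sk; apply/eqP/vT; rewrite mem_filter sk.
Qed.

(* The let makes the VM compute the eight facet codes once, not once per subset. *)
Lemma star_facets_Q4_check :
  let codes := [seq facet_code k c | k <- iota 0 4, c <- [:: true; false]] in
  all (fun l => sumn [seq star_code l code : nat | code <- codes] <= 4) (bitseqs 16).
Proof. by vm_compute. Qed.

Lemma sum_ord_bool m (F : nat -> bool -> nat) :
  \sum_(k < m) \sum_(c : bool) F k c =
  sumn [seq F k c | k <- iota 0 m, c <- [:: true; false]].
Proof.
rewrite sumnE big_allpairs_dep -(big_mkord xpredT (fun k => \sum_(c : bool) F k c)).
rewrite /index_iota subn0.
by apply: eq_bigr => k _; rewrite big_bool !big_cons big_nil /= addn0.
Qed.

Lemma star_facets_Q4_le4 (T : {set cube 4}) :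
  \sum_(k < 4) \sum_(c : bool) star T [set y : cube 4 | y k == c] <= 4.
Proof.
set l := [seq cube_of s \in T | s <- V4].
have l16 : l \in bitseqs 16 by rewrite mem_bitseqs size_map.
apply: leq_trans (allP star_facets_Q4_check l l16); apply: eq_leq.
under eq_bigr => k _ do under eq_bigr => c _ do rewrite star_facet_code -/l.
by rewrite (@sum_ord_bool 4 (fun k c => star_code l (facet_code k c))) map_allpairs.
Qed.

(** * The upper bound *)

Lemma subcube_embed_facet n m (e : 'I_m -> 'I_n) w u k : injective e ->
  subcube_of (e @: setT :\ e k) (embed e w u) =
  embed e w @: [set y : cube m | y k == u k].
Proof.
move=> e_inj; have -> : e @: setT :\ e k = e @: (setT :\ k).
  apply/setP=> i; rewrite !inE.
  apply/andP/imsetP => [[ik /imsetP [k' _ def_i]]|[k' k'k ->]].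
    by exists k'; rewrite // !inE andbT; apply: contraNneq ik => <-; rewrite def_i.
  by rewrite imset_f ?(inj_eq e_inj) //; move: k'k; rewrite !inE andbT.
rewrite subcube_embed //; apply: (congr1 (fun A : {set cube m} => embed e w @: A)).
apply/setP => y; rewrite !inE; apply/forallP/eqP => [/(_ k)|yk k'].
  by rewrite !inE eqxx => /eqP.
by rewrite !inE andbT negbK; apply/implyP => /eqP ->; rewrite yk.
Qed.

(* b and flip_on E b are antipodal in the 4-subcube through b with free directions E, so the
   sum runs over its eight facets. *)
Lemma star_facets_pair_le4 n (S : {set cube n}) (E : {set 'I_n}) b : #|E| = 4 ->
  \sum_(j in E) (star S (subcube_of (E :\ j) b) + star S (subcube_of (E :\ j) (flip_on E b)))
  <= 4.
Proof.
move=> E4; have [e e_inj De] := injection_onto E4.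
pose T := embed e b @^-1: S.
have facet_star u k :
    star S (subcube_of (E :\ e k) (embed e b u)) = star T [set y : cube 4 | y k == u k].
  rewrite -De subcube_embed_facet // star_imset //; first exact: embed_inj.
  exact: adj_embed.
have b_embed : b = embed e b [ffun k => b (e k)] by rewrite embed_restrict.
have flip_embed : flip_on E b = embed e b [ffun k => ~~ b (e k)].
  apply/ffunP=> i; rewrite flip_onE; case: (embedP e i) => [k ->|iNe].
    by rewrite embed_in // ffunE -De imset_f.
  by rewrite embed_out // -De (negbTE iNe).
rewrite -De big_imset /=; last by move=> k k' _ _ /e_inj.
apply: leq_trans (star_facets_Q4_le4 T); rewrite leq_eqVlt; apply/orP; left; apply/eqP.
apply: eq_big => [k|k _]; first by rewrite inE.
rewrite De flip_embed {1}b_embed !facet_star !ffunE big_bool.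
by case: (b (e k)) => //=; rewrite addnC.
Qed.

Lemma sum_star_facets_le n (S : {set cube n}) (E : {set 'I_n}) : #|E| = 4 ->
  \sum_(b : cube n) \sum_(j in E) star S (subcube_of (E :\ j) b) <= 2 ^ n.+1.
Proof.
move=> E4; set X := \sum_(b : cube n) _.
suff : 2 * X <= \sum_(b : cube n) 4.
  by rewrite sum_nat_const card_ffun card_bool card_ord expnS; clearbody X; lia.
rewrite mul2n -addnn {2}/X (reindex_inj (can_inj (xorcK [ffun i => i \in E]))).
rewrite -big_split /=.
by apply: leq_sum => b _; rewrite -big_split; apply: star_facets_pair_le4.
Qed.

Lemma sum_sets_extend n m (F : {set 'I_n} -> 'I_n -> nat) :
  \sum_(D : {set 'I_n} | #|D| == m) \sum_(j in ~: D) F D j =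
  \sum_(E : {set 'I_n} | #|E| == m.+1) \sum_(j in E) F (E :\ j) j.
Proof.
rewrite (exchange_big_dep xpredT) //= [RHS](exchange_big_dep xpredT) //=.
apply: eq_bigr => j _.
rewrite [RHS](reindex_onto (fun D => j |: D) (fun E => E :\ j)) /=; last first.
  by move=> E /andP [_ jE]; rewrite setD1K.
apply: eq_big => [D|D /andP [_ jND]]; last by rewrite setU1K // -in_setC.
rewrite in_setC setU11 andbT; case: (boolP (j \in D)) => [jD|jND].
  by rewrite andbF; apply/esym/andP => -[_ /eqP eqD]; move: jD; rewrite -eqD setD11.
by rewrite andbT setU1K // eqxx andbT cardsU1 jND add1n eqSS.
Qed.

Lemma LambdaS_W12_upper n (S : {set cube n}) : 4 <= n ->
  2 * LambdaS W12 S <= 'C(n, 3) * 2 ^ (n - 3).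
Proof.
move=> n4.
have facet_count : (n - 3) * (8 * LambdaS W12 S) <= 'C(n, 4) * 2 ^ n.+1.
  rewrite LambdaS_W12E -[8]/(2 ^ 3) -sum_subcubes big_distrr /=.
  rewrite (eq_bigr (fun D => \sum_(j in ~: D) \sum_b star S (subcube_of D b))); last first.
    move=> D /eqP D3; rewrite sum_nat_const; congr (_ * _).
    by have := cardsC D; rewrite D3 card_ord; lia.
  rewrite (@sum_sets_extend n 3 (fun D _ => \sum_b star S (subcube_of D b))).
  apply: (@leq_trans (\sum_(E : {set 'I_n} | #|E| == 4) 2 ^ n.+1)).
    by apply: leq_sum => E /eqP E4; rewrite exchange_big; apply: sum_star_facets_le.
  by rewrite sum_nat_cond_const card_draws card_ord.
have pow_n1 : 2 ^ n.+1 = 2 ^ 4 * 2 ^ (n - 3) by rewrite -expnD; congr (2 ^ _); lia.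
move: facet_count (mul_bin_left n 3); rewrite pow_n1.
move: (LambdaS W12 S) 'C(n, 3) 'C(n, 4) (2 ^ (n - 3)) => L C3 C4 P; nia.
Qed.

(** * The lower bound *)

Definition weight n (x : cube n) : nat := #|[set i | x i]|.

Definition W12_extremal n : {set cube n} := [set x | weight x %% 4 < 2].

Section SubcubeWeight.
Variables (n : nat) (D : {set 'I_n}) (b : cube n).

Definition outer_weight : nat := #|[set i | b i] :\: D|.

Definition fill (c : bool) : cube n := [ffun i => if i \in D then c else b i].

Lemma fill_subcube c : fill c \in subcube_of D b.
Proof.
by rewrite inE; apply/forallP=> i; apply/implyP=> iND; rewrite ffunE (negbTE iND).
Qed.

Lemma diff_fill c x : x \in subcube_of D b -> diff (fill c) x = D :&: [set i | x i != c].
Proof.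
rewrite inE => /forallP xb; apply/setP=> i; rewrite !inE ffunE.
case: (boolP (i \in D)) => [_|iND] /=; first by rewrite eq_sym.
by rewrite (eqP (implyP (xb i) iND)) eqxx.
Qed.

Lemma weight_subcube x : x \in subcube_of D b ->
  weight x = outer_weight + #|D :&: [set i | x i]|.
Proof.
rewrite inE => /forallP xb; rewrite /weight /outer_weight -(cardsID D [set i | x i]).
rewrite addnC setIC; congr (_ + _); apply: eq_card => i; rewrite !inE.
by case: (boolP (i \in D)) => //= iND; rewrite (eqP (implyP (xb i) iND)).
Qed.

Lemma star_extremal : #|D| = 3 -> ~~ odd outer_weight ->
  star (W12_extremal n) (subcube_of D b).
Proof.
move=> D3 w_odd; have w_even : outer_weight %% 2 = 0 by rewrite modn2 (negbTE w_odd).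
set w := outer_weight in w_even *.
pose c := w %% 4 == 2.
apply/existsP; exists (fill c); rewrite fill_subcube /=.
apply/forallP=> x; apply/implyP=> xC; rewrite inE (weight_subcube xC) (diff_fill _ xC) -/w.
have -> : D :&: [set i | x i != c] = if c then D :\: [set i | x i] else D :&: [set i | x i].
  by apply/setP=> i; case: c; rewrite !inE; case: (x i); rewrite ?andbT ?andbF.
have := cardsID [set i | x i] D; rewrite D3 /c.
case: (w %% 4 =P 2) => [w2|w_ne2] /=;
  set m := #|D :&: _|; set k := #|D :\: _|; clearbody w m k => card_x;
  by apply/eqP; apply/idP/idP; lia.
Qed.

End SubcubeWeight.

Lemma outer_weight_flip n (D : {set 'I_n}) b j : j \notin D ->
  odd (outer_weight D (flip_on [set j] b)) = ~~ odd (outer_weight D b).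
Proof.
move=> jND; rewrite /outer_weight (cardsD1 j (_ :\: D)) [in RHS](cardsD1 j).
have -> : ([set i | flip_on [set j] b i] :\: D) :\ j = ([set i | b i] :\: D) :\ j.
  by apply/setP=> i; rewrite !inE flip_onE inE; case: (i =P j).
by rewrite !inE flip_onE inE eqxx jND; case: (b j); rewrite /= ?negbK.
Qed.

Lemma even_outer_weights n (D : {set 'I_n}) :
  2 ^ n <= 2 * \sum_(b : cube n) ~~ odd (outer_weight D b).
Proof.
have card_cube : \sum_(b : cube n) 1 = 2 ^ n.
  by rewrite sum1_card card_ffun card_bool card_ord.
case: (pickP (fun j => j \notin D)) => [j jND|D_full].
  rewrite mul2n -addnn {2}(reindex_inj (can_inj (xorcK [ffun i => i \in [set j]]))).
  rewrite -big_split /=.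
  by rewrite -card_cube; apply/eq_leq/eq_bigr => b _; rewrite outer_weight_flip //; case: odd.
rewrite [X in _ <= 2 * X](eq_bigr (fun _ => 1)) ?card_cube ?leq_pmull // => b _.
suff -> : outer_weight D b = 0 by [].
by apply/eqP; rewrite cards_eq0; apply/eqP/setP=> i; rewrite !inE (negbFE (D_full i)).
Qed.

Lemma LambdaS_W12_extremal n :
  'C(n, 3) * 2 ^ (n - 3) <= 2 * LambdaS W12 (W12_extremal n).
Proof.
case: (ltnP n 3) => [n_lt3|n3]; first by rewrite bin_small.
have star_count : 'C(n, 3) * 2 ^ n <= 2 * (8 * LambdaS W12 (W12_extremal n)).
  rewrite LambdaS_W12E -[8]/(2 ^ 3) -sum_subcubes big_distrr /=.
  rewrite -[n in 'C(n, 3)](card_ord n) -card_draws -sum_nat_cond_const.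
  apply: leq_sum => D /eqP D3; apply: leq_trans (even_outer_weights D) _.
  rewrite leq_mul2l /=; apply: leq_sum => b _.
  by case: (boolP (odd _)) => //= w_even; rewrite star_extremal.
have pow_n : 2 ^ n = 2 ^ 3 * 2 ^ (n - 3) by rewrite -expnD; congr (2 ^ _); lia.
move: star_count; rewrite pow_n.
move: (LambdaS W12 _) 'C(n, 3) (2 ^ (n - 3)) => L C P; nia.
Qed.

Lemma Lambda_attained (H : {set cube 3}) n :
  exists S : {set cube n}, Lambda H n = LambdaS H S.
Proof.
rewrite /Lambda; have [|S ->] := @eq_bigmax _ (@LambdaS n H); last by exists S.
by apply/card_gt0P; exists set0.
Qed.

Theorem theorem1p2 :
  Lambda W12 3 = 1 /\
  forall n : nat, 4 <= n -> 2 * Lambda W12 n = 'C(n, 3) * 2 ^ (n - 3).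
Proof.
have lower n : 'C(n, 3) * 2 ^ (n - 3) <= 2 * Lambda W12 n.
  by apply: leq_trans (LambdaS_W12_extremal n) _; rewrite leq_mul2l leq_bigmax orbT.
split.
  have := lower 3; have [S ->] := Lambda_attained W12 3.
  have := LambdaS_le_card_3subcubes W12 S; have := card_3subcubes 3; rewrite binn /=; lia.
move=> n n4; apply/eqP; rewrite eqn_leq lower andbT.
by have [S ->] := Lambda_attained W12 n; apply: LambdaS_W12_upper.
Qed.
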